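(* Let $\Sigma$ be an alphabet and $(\mathcal{O},d)$ a pseudometric space. The functor $H=V\circ K:\mathbf{HS}_{\Sigma}\to\mathbf{Tr}_{\Sigma\times\mathbb{R}_{\ge0}}\mathcal{O}$ is a coreflection, and the unit and counit of this adjunction are $0$-bounded morphisms.
   Context: A hybrid system is a tuple $(M,I,(n_i)_{i\in I},E,(G_e)_{e\in E},(R_{e,i})_{e\in E,i\in I},(F_{m,i})_{m\in M,i\in I},(I_m)_{m\in M},m_0,\sigma_0,o)$ where $M$ is a set of modes, $I$ a set of subsystems, $n_i\in\mathbb{N}$, $E\subseteq M\times\Sigma\times M$ a set of events, $G_e\subseteq\prod_{i\in I}\mathbb{R}^{n_i}$ guards, $R_{e,i}:\mathbb{R}^{n_i}\to\mathbb{R}^{n_i}$ reset functions, $F_{m,i}:\mathbb{R}\times\mathbb{R}^{n_i}\to\mathbb{R}^{n_i}$ continuous flow functions that are locally Lipschitz in the second argument, $I_m\subseteq\prod_{i}\mathbb{R}^{n_i}$ invariants, $m_0\in M$, $\sigma_0=(\sigma_{i,0})_i\in\prod_i\mathbb{R}^{n_i}$, and $o:M\times\prod_i\mathbb{R}^{n_i}\to\mathcal{O}$. The system moves from configuration $(m,\sigma)$ to $(m',\sigma')$ doing action $a$ with time $t\ge0$ if $e=(m,a,m')\in E$ and for every $i\in I$ there is a differentiable $x_i:[0,t]\to\mathbb{R}^{n_i}$ with $\dot x_i(s)=F_{m,i}(s,x_i(s))$ and $(x_i(s))_i\in I_m$ for all $s\in[0,t]$, $(x_i(0))_i=\sigma$,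 $(x_i(t))_i\in G_e$, and $\sigma'=(R_{e,i}(x_i(t)))_i$. A run is a sequence $(m_0,\sigma_0)\xrightarrow{a_1,t_1}\cdots\xrightarrow{a_k,t_k}(m_k,\sigma_k)$ of such moves starting at the initial configuration. An $\epsilon$-bounded morphism $T\to T'$ is a pair $(f_M,f_I)$ with $f_M:M\to M'$, $f_I:I'\to I$ such that: $f_M(m_0)=m'_0$; $(m,a,m')\in E$ implies $f_E(m,a,m'):=(f_M(m),a,f_M(m'))\in E'$; for all $i'\in I'$, $n_{i'}=n_{f_I(i')}$, $F_{m,f_I(i')}=F'_{f_M(m),i'}$ for all $m$, and $R_{e,f_I(i')}=R'_{f_E(e),i'}$ for all $e$; writing $f_X((x_i)_{i\in I})=(x_{f_I(i')})_{i'\in I'}$, one has $f_X(\sigma_0)=\sigma'_0$, $\sigma\in I_m\Rightarrow f_X(\sigma)\in I'_{f_M(m)}$, $\sigma\in G_e\Rightarrow f_X(\sigma)\in G'_{f_E(e)}$; and for every run ending in $(m_k,\sigma_k)$, $d(o(m_k,\sigma_k),o'(f_M(m_k),f_X(\sigma_k)))\le\epsilon$. Bounded morphisms (those $\epsilon$-bounded for some $\epsilon\ge0$) with composition $(g_M,g_I)\circ(f_M,f_I)=(g_M\circ f_M,f_I\circ g_I)$ form the category $\mathbf{HS}_{\Sigma}$. For an alphabet $A$, a transition system with observations is $(S,i,\Delta,\omega)$ with $\Delta\subseteq S\times A\times S$, $\omega:S\to\mathcal{O}$; an $\epsilon$-bounded morphism is a function on states preserving the initial state and transitions with $d(\omega(s),\omega'(f(s)))\le\epsilon$;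 bounded morphisms form $\mathbf{TS}_{A}\mathcal{O}$, and $\mathbf{Tr}_{A}\mathcal{O}$ is its full subcategory of systems whose underlying transition system is a synchronization tree (every state reached by exactly one run from the initial state). $K:\mathbf{HS}_{\Sigma}\to\mathbf{TS}_{\Sigma\times\mathbb{R}_{\ge0}}\mathcal{O}$ sends $T$ to the system whose states are configurations $(m,\sigma)\in M\times\prod_i\mathbb{R}^{n_i}$, initial state $(m_0,\sigma_0)$, transitions $((m,\sigma),(a,t),(m',\sigma'))$ whenever $T$ moves from $(m,\sigma)$ to $(m',\sigma')$ doing $a$ with time $t$, and observation $o$; on morphisms $K(f_M,f_I)(m,\sigma)=(f_M(m),f_X(\sigma))$. $V:\mathbf{TS}_{A}\mathcal{O}\to\mathbf{Tr}_{A}\mathcal{O}$ sends a system to the tree of its runs (initial state the one-element run, transitions extending a run by one transition) with observation of a run equal to the observation of its last state, acting pointwise on morphisms. A functor is a coreflection if it is a right adjoint whose left adjoint is fully faithful (equivalently, a right adjoint whose unit is a natural isomorphism). *)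

From Stdlib Require Import Reals List.
From Stdlib Require Fin.
Open Scope R_scope.

Definition vec (n : nat) : Type := Fin.t n -> R.

Definition cast {a b : nat} (p : a = b) (v : vec a) : vec b :=
  eq_rect a vec v b p.

Definition cont2 {n : nat} (F : R -> vec n -> vec n) : Prop :=
  forall (t0 : R) (x0 : vec n) (eps : R), 0 < eps ->
    exists delta, 0 < delta /\
      forall t x, Rabs (t - t0) < delta -> (forall j, Rabs (x j - x0 j) < delta) ->
        forall k, Rabs (F t x k - F t0 x0 k) < eps.

Definition loc_lipschitz {n : nat} (F : R -> vec n -> vec n) : Prop :=
  forall (t0 : R) (x0 : vec n), exists r L, 0 < r /\ 0 <= L /\
    forall t x y, Rabs (t - t0) < r ->
      (forall j, Rabs (x j - x0 j) < r) -> (forall j, Rabs (y j - x0 j) < r) ->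
      forall delta, (forall j, Rabs (x j - y j) <= delta) ->
        forall k, Rabs (F t x k - F t y k) <= L * delta.

Definition deriv_within (a b : R) (f : R -> R) (s v : R) : Prop :=
  forall eps, 0 < eps -> exists delta, 0 < delta /\
    forall h, h <> 0 -> Rabs h < delta -> a <= s + h <= b ->
      Rabs ((f (s + h) - f s) / h - v) < eps.

Definition nnR : Type := {t : R | 0 <= t}.

Section Systems.
Variable Sigma : Type.
Variable O : Type.
Variable d : O -> O -> R.

Record HSys : Type := {
  hM : Type;
  hI : Type;
  hn : hI -> nat;
  hE : hM * Sigma * hM -> Prop;
  hG : {e : hM * Sigma * hM | hE e} -> (forall i : hI, vec (hn i)) -> Prop;
  hR : {e : hM * Sigma * hM | hE e} -> forall i : hI, vec (hn i) -> vec (hn i);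
  hF : hM -> forall i : hI, R -> vec (hn i) -> vec (hn i);
  hF_cont : forall m i, cont2 (hF m i);
  hF_lip : forall m i, loc_lipschitz (hF m i);
  hInv : hM -> (forall i : hI, vec (hn i)) -> Prop;
  hm0 : hM;
  hs0 : forall i : hI, vec (hn i);
  ho : hM -> (forall i : hI, vec (hn i)) -> O
}.

Definition hstate (S : HSys) : Type := forall i : hI S, vec (hn S i).
Definition config (S : HSys) : Type := (hM S * hstate S)%type.

Definition hstep (S : HSys) (c : config S) (a : Sigma) (t : R) (c' : config S) : Prop :=
  0 <= t /\
  exists he : hE S (fst c, a, fst c'),
  exists x : forall i : hI S, R -> vec (hn S i),
    (forall i, x i 0 = snd c i) /\
    (forall i s, 0 <= s <= t -> forall k,
        deriv_within 0 t (fun u => x i u k) s (hF S (fst c) i s (x i s) k)) /\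
    (forall s, 0 <= s <= t -> hInv S (fst c) (fun i => x i s)) /\
    hG S (exist _ (fst c, a, fst c') he) (fun i => x i t) /\
    snd c' = (fun i => hR S (exist _ (fst c, a, fst c') he) i (x i t)).

Inductive reach (S : HSys) : config S -> Prop :=
| reach0 : reach S (hm0 S, hs0 S)
| reachS : forall c a t c', reach S c -> hstep S c a t c' -> reach S c'.

Definition transport (S S' : HSys) (fI : hI S' -> hI S)
  (fdim : forall i', hn S (fI i') = hn S' i') (s : hstate S) : hstate S' :=
  fun i' => cast (fdim i') (s (fI i')).

Record HSmor (S S' : HSys) : Type := {
  fM : hM S -> hM S';
  fI : hI S' -> hI S;
  f_init : fM (hm0 S) = hm0 S';
  f_edge : forall m a m', hE S (m, a, m') -> hE S' (fM m, a, fM m');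
  f_dim : forall i', hn S (fI i') = hn S' i';
  f_flow : forall m i' t x,
      cast (f_dim i') (hF S m (fI i') t x) = hF S' (fM m) i' t (cast (f_dim i') x);
  f_reset : forall m a m' (he : hE S (m, a, m')) i' x,
      cast (f_dim i') (hR S (exist _ (m, a, m') he) (fI i') x)
      = hR S' (exist _ (fM m, a, fM m') (f_edge m a m' he)) i' (cast (f_dim i') x);
  f_s0 : transport S S' fI f_dim (hs0 S) = hs0 S';
  f_inv : forall m s, hInv S m s -> hInv S' (fM m) (transport S S' fI f_dim s);
  f_guard : forall m a m' (he : hE S (m, a, m')) s,
      hG S (exist _ (m, a, m') he) s ->
      hG S' (exist _ (fM m, a, fM m') (f_edge m a m' he)) (transport S S' fI f_dim s);
  f_bounded : exists eps, 0 <= eps /\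
      forall m s, reach S (m, s) -> d (ho S m s) (ho S' (fM m) (transport S S' fI f_dim s)) <= eps
}.

Definition kmap (S S' : HSys) (h : HSmor S S') (c : config S) : config S' :=
  (fM S S' h (fst c), transport S S' (fI S S' h) (f_dim S S' h) (snd c)).

Definition hs_zero_bounded (S S' : HSys) (h : HSmor S S') : Prop :=
  forall m s, reach S (m, s) -> d (ho S m s) (ho S' (fM S S' h m) (transport S S' (fI S S' h) (f_dim S S' h) s)) <= 0.

Definition hs_eq (S S' : HSys) (h h' : HSmor S S') : Prop :=
  (forall m, fM S S' h m = fM S S' h' m) /\ (forall i, fI S S' h i = fI S S' h' i).

Definition Lab : Type := (Sigma * nnR)%type.

Record TSys : Type := {
  tS : Type;
  ti : tS;
  tD : tS -> Lab -> tS -> Prop;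
  tw : tS -> O
}.

Record TSmor (T T' : TSys) : Type := {
  tf : tS T -> tS T';
  tf_init : tf (ti T) = ti T';
  tf_tr : forall s a s', tD T s a s' -> tD T' (tf s) a (tf s');
  tf_bounded : exists eps, 0 <= eps /\ forall s, d (tw T s) (tw T' (tf s)) <= eps
}.

Definition ts_zero_bounded (T T' : TSys) (f : TSmor T T') : Prop :=
  forall s, d (tw T s) (tw T' (tf T T' f s)) <= 0.

Fixpoint valid_from (T : TSys) (s : tS T) (l : list (Lab * tS T)) : Prop :=
  match l with
  | nil => True
  | (a, s') :: l' => tD T s a s' /\ valid_from T s' l'
  end.

Fixpoint last_st (T : TSys) (s : tS T) (l : list (Lab * tS T)) : tS T :=
  match l with
  | nil => s
  | (_, s') :: l' => last_st T s' l'
  end.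

Definition is_tree (T : TSys) : Prop :=
  forall s, exists! l, valid_from T (ti T) l /\ last_st T (ti T) l = s.

Definition run (T : TSys) : Type := {l : list (Lab * tS T) | valid_from T (ti T) l}.

Definition V (T : TSys) : TSys := {|
  tS := run T;
  ti := exist _ nil I;
  tD := fun r a r' => exists s', proj1_sig r' = proj1_sig r ++ (a, s') :: nil;
  tw := fun r => tw T (last_st T (ti T) (proj1_sig r))
|}.

Definition K (S : HSys) : TSys := {|
  tS := config S;
  ti := (hm0 S, hs0 S);
  tD := fun c a c' => hstep S c (fst a) (proj1_sig (snd a)) c';
  tw := fun c => ho S (fst c) (snd c)
|}.

Definition H (S : HSys) : TSys := V (K S).

Definition hmap (S S' : HSys) (h : HSmor S S') (l : list (Lab * config S))
  : list (Lab * config S') :=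
  map (fun p => (fst p, kmap S S' h (snd p))) l.

End Systems.

Arguments hM {Sigma O}. Arguments hI {Sigma O}. Arguments hn {Sigma O}.
Arguments hE {Sigma O}. Arguments hG {Sigma O}. Arguments hR {Sigma O}.
Arguments hF {Sigma O}. Arguments hInv {Sigma O}. Arguments hm0 {Sigma O}.
Arguments hs0 {Sigma O}. Arguments ho {Sigma O}.
Arguments hstate {Sigma O}. Arguments config {Sigma O}. Arguments hstep {Sigma O}.
Arguments reach {Sigma O}. Arguments transport {Sigma O}.
Arguments fM {Sigma O d S S'}. Arguments fI {Sigma O d S S'}.
Arguments f_dim {Sigma O d S S'}. Arguments f_edge {Sigma O d S S'}.
Arguments kmap {Sigma O d S S'}. Arguments hs_zero_bounded {Sigma O d S S'}.
Arguments hs_eq {Sigma O d S S'}.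
Arguments tS {Sigma O}. Arguments ti {Sigma O}. Arguments tD {Sigma O}. Arguments tw {Sigma O}.
Arguments tf {Sigma O d T T'}. Arguments ts_zero_bounded {Sigma O d T T'}.
Arguments valid_from {Sigma O}. Arguments last_st {Sigma O}.
Arguments is_tree {Sigma O}. Arguments run {Sigma O}.
Arguments V {Sigma O}. Arguments K {Sigma O}. Arguments H {Sigma O}.
Arguments hmap {Sigma O d S S'}.
Arguments TSmor {Sigma O} d T T'. Arguments HSmor {Sigma O} d S S'.

From Stdlib Require Import Reals List Lra Lia Classical FunctionalExtensionality ProofIrrelevance ClassicalEpsilon.
Open Scope R_scope.

(* The left adjoint sends a transition system T to a free hybrid system: its
   modes are the states of T and its subsystems are all realizations of T in
   some R^n, i.e. flows at the states, resets on the edges and values at the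
   states such that every transition of T is traced by a solution of the flow
   from the value at its source, reset to the value at its target.  A clock
   subsystem (flow 1, value 0) forces every step of the free system to last as
   long as a transition of T, so its runs are the lifts of runs of T and the
   unit is invertible on trees.  A morphism g : T -> H S makes each subsystem of
   S a realization of T (flows of the modes reached by g, values the states
   reached by g), which yields the transpose of g; uniqueness of solutions of
   locally Lipschitz equations makes it carry invariants and guards over.
   Observations are carried over unchanged, so unit and counit are 0-bounded. *)

(** * Real induction and the mean value inequality *)

Lemma real_induction (a b : R) (P : R -> Prop) :
  a <= b -> P a ->
  (forall tau, a < tau <= b -> (forall s, a <= s < tau -> P s) -> P tau) ->
  (forall tau, a <= tau < b -> (forall s, a <= s <= tau -> P s) ->
     exists dl, 0 < dl /\ forall s, tau < s <= tau + dl -> s <= b -> P s) ->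
  forall s, a <= s <= b -> P s.
Proof.
  intros Hab Pa Hleft Hright.
  set (E := fun tau => a <= tau <= b /\ forall s, a <= s <= tau -> P s).
  assert (Ea : E a) by (split; [lra|]; intros s Hs; replace s with a by lra; exact Pa).
  destruct (completeness E) as [T [HTub HTleast]].
  { exists b. intros z [Hz _]. lra. }
  { exists a. exact Ea. }
  assert (HaT : a <= T) by (apply HTub, Ea).
  assert (HTb : T <= b) by (apply HTleast; intros z [Hz _]; lra).
  assert (below : forall s, a <= s < T -> P s).
  { intros s Hs. apply NNPP. intros HPs.
    enough (T <= s) by lra.
    apply HTleast. intros z [Hz Hzs]. apply Rnot_lt_le. intros Hsz.
    apply HPs, Hzs. lra. }
  assert (ET : E T).
  { split; [lra|]. intros s Hs.
    destruct (Rle_lt_or_eq_dec s T (proj2 Hs)) as [Hlt| ->]; [apply below; lra|].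
    destruct (Rle_lt_or_eq_dec a T HaT) as [HaT'| <-]; [apply Hleft; auto; lra|exact Pa]. }
  destruct (Rle_lt_or_eq_dec T b HTb) as [HTb'| <-]; [|intros s Hs; apply ET; lra].
  destruct (Hright T (conj HaT HTb') (proj2 ET)) as [dl [Hdl Hstep]].
  enough (Rmin (T + dl) b <= T) by (unfold Rmin in *; destruct Rle_dec; lra).
  apply HTub. split; [unfold Rmin; destruct Rle_dec; lra|].
  intros s Hs. destruct (Rle_dec s T); [apply ET; lra|].
  apply Hstep; unfold Rmin in Hs; destruct Rle_dec in Hs; lra.
Qed.

Lemma left_approx (a tau dl : R) :
  a < tau -> 0 < dl -> exists u, a <= u < tau /\ Rabs (u - tau) < dl.
Proof.
  intros Hat Hdl. exists (Rmax a (tau - dl / 2)).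
  unfold Rmax; destruct Rle_dec; split; try lra; rewrite Rabs_left; lra.
Qed.

Lemma deriv_within_increment a b f s v eps :
  deriv_within a b f s v -> 0 < eps -> exists dl, 0 < dl /\
    forall h, Rabs h < dl -> a <= s + h <= b ->
      Rabs (f (s + h) - f s) <= (Rabs v + eps) * Rabs h.
Proof.
  intros Hf Heps. destruct (Hf eps Heps) as [dl [Hdl Hquot]].
  exists dl; split; [exact Hdl|]. intros h Hh Hin.
  destruct (Req_dec h 0) as [->|Hh0].
  { rewrite Rplus_0_r, Rminus_diag, Rabs_R0. lra. }
  replace (f (s + h) - f s) with (((f (s + h) - f s) / h - v + v) * h) by (field; exact Hh0).
  rewrite Rabs_mult. apply Rmult_le_compat_r; [apply Rabs_pos|].
  pose proof (Rabs_triang ((f (s + h) - f s) / h - v) v).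
  pose proof (Hquot h Hh0 Hh Hin). lra.
Qed.

Lemma deriv_within_cont a b f s v :
  deriv_within a b f s v -> forall eps, 0 < eps -> exists dl, 0 < dl /\
    forall u, Rabs (u - s) < dl -> a <= u <= b -> Rabs (f u - f s) < eps.
Proof.
  intros Hf eps Heps.
  destruct (deriv_within_increment a b f s v 1 Hf Rlt_0_1) as [dl [Hdl Hinc]].
  assert (Hv : 0 < Rabs v + 1) by (pose proof (Rabs_pos v); lra).
  exists (Rmin dl (eps / (Rabs v + 1))). split.
  { apply Rmin_pos; [exact Hdl|]. apply Rdiv_lt_0_compat; lra. }
  intros u Hu Hin.
  assert (Hu1 : Rabs (u - s) < dl) by (eapply Rlt_le_trans; [exact Hu|apply Rmin_l]).
  assert (Hu2 : Rabs (u - s) * (Rabs v + 1) < eps).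
  { apply (Rmult_lt_compat_r (Rabs v + 1)) in Hu; [|exact Hv].
    eapply Rlt_le_trans; [exact Hu|].
    apply (Rle_trans _ (eps / (Rabs v + 1) * (Rabs v + 1))).
    - apply Rmult_le_compat_r; [lra|apply Rmin_r].
    - right; field; lra. }
  specialize (Hinc (u - s) Hu1). replace (s + (u - s)) with u in Hinc by ring.
  specialize (Hinc Hin). lra.
Qed.

Lemma deriv_within_restrict a b a' b' f s v :
  deriv_within a b f s v -> a <= a' -> b' <= b -> deriv_within a' b' f s v.
Proof.
  intros Hf Ha Hb eps Heps. destruct (Hf eps Heps) as [dl [Hdl Hquot]].
  exists dl; split; [exact Hdl|]. intros h Hh0 Hh Hin. apply Hquot; auto; lra.
Qed.

Lemma deriv_within_sub a b f g s v w :
  deriv_within a b f s v -> deriv_within a b g s w ->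
  deriv_within a b (fun u => f u - g u) s (v - w).
Proof.
  intros Hf Hg eps Heps.
  destruct (Hf (eps / 2)) as [d1 [Hd1 H1]]; [lra|].
  destruct (Hg (eps / 2)) as [d2 [Hd2 H2]]; [lra|].
  exists (Rmin d1 d2); split; [apply Rmin_pos; auto|].
  intros h Hh0 Hh Hin.
  specialize (H1 h Hh0 (Rlt_le_trans _ _ _ Hh (Rmin_l _ _)) Hin).
  specialize (H2 h Hh0 (Rlt_le_trans _ _ _ Hh (Rmin_r _ _)) Hin).
  replace ((f (s + h) - g (s + h) - (f s - g s)) / h - (v - w))
    with (((f (s + h) - f s) / h - v) + - ((g (s + h) - g s) / h - w)) by (field; exact Hh0).
  eapply Rle_lt_trans; [apply Rabs_triang|].
  rewrite Rabs_Ropp. lra.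
Qed.

(* Real induction on |f s - f a| <= (C + k) (s - a), for every k > 0. *)
Lemma deriv_within_bound a b f v C :
  a <= b -> (forall u, a <= u <= b -> deriv_within a b f u (v u)) ->
  (forall u, a <= u <= b -> Rabs (v u) <= C) ->
  Rabs (f b - f a) <= C * (b - a).
Proof.
  intros Hab Hder Hv.
  assert (HC : 0 <= C) by (eapply Rle_trans; [apply Rabs_pos|apply (Hv a)]; lra).
  apply Rle_plus_epsilon. intros eps Heps.
  set (k := eps / (b - a + 1)).
  assert (Hk : 0 < k) by (apply Rdiv_lt_0_compat; lra).
  assert (Hkba : k * (b - a) <= eps).
  { unfold k. apply (Rmult_le_reg_r (b - a + 1)); [lra|].
    replace (eps / (b - a + 1) * (b - a) * (b - a + 1)) with (eps * (b - a)) by (field; lra).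
    nra. }
  enough (Rabs (f b - f a) <= (C + k) * (b - a)) by nra.
  apply (real_induction a b (fun s => Rabs (f s - f a) <= (C + k) * (s - a))); [exact Hab| | | |lra].
  - rewrite Rminus_diag, Rabs_R0. lra.
  - intros tau Htau Hbelow. apply Rle_plus_epsilon. intros eta Heta.
    destruct (deriv_within_cont a b f tau (v tau) (Hder tau ltac:(lra)) eta Heta) as [dl [Hdl Hcont]].
    destruct (left_approx a tau dl (proj1 Htau) Hdl) as [u [Hu Hutau]].
    specialize (Hcont u Hutau ltac:(lra)). specialize (Hbelow u Hu).
    pose proof (Rdist_tri (f tau) (f a) (f u)). unfold Rdist in *.
    rewrite Rabs_minus_sym in Hcont. nra.
  - intros tau Htau Hupto.
    destruct (deriv_within_increment a b f tau (v tau) k (Hder tau ltac:(lra)) Hk) as [dl [Hdl Hinc]].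
    exists (dl / 2). split; [lra|]. intros s Hs Hsb.
    specialize (Hinc (s - tau)). rewrite Rabs_right in Hinc by lra.
    replace (tau + (s - tau)) with s in Hinc by ring.
    specialize (Hinc ltac:(lra) ltac:(lra)). specialize (Hupto tau ltac:(lra)).
    pose proof (Rdist_tri (f s) (f a) (f tau)). unfold Rdist in *.
    pose proof (Hv tau ltac:(lra)). nra.
Qed.

(** * Uniqueness of solutions of locally Lipschitz equations *)

Lemma Rabs_le_0_eq0 z : Rabs z <= 0 -> z = 0.
Proof. unfold Rabs. destruct Rcase_abs; lra. Qed.

Lemma geometric_bound_eq0 z B : (forall m, Rabs z <= B * (/ 2) ^ m) -> z = 0.
Proof.
  intros Hz. apply Rabs_le_0_eq0, Rle_plus_epsilon. intros eps Heps.
  assert (HB : 0 <= B) by (specialize (Hz O); simpl in Hz; pose proof (Rabs_pos z); lra).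
  destruct (pow_lt_1_zero (/ 2)) with (y := eps / (B + 1)) as [N HN].
  { rewrite Rabs_right; lra. }
  { apply Rdiv_lt_0_compat; lra. }
  specialize (HN N (le_n N)). rewrite Rabs_right in HN by (apply Rle_ge, pow_le; lra).
  apply (Rle_trans _ (B * (eps / (B + 1)))).
  - eapply Rle_trans; [apply (Hz N)|]. apply Rmult_le_compat_l; lra.
  - apply (Rmult_le_reg_r (B + 1)); [lra|].
    replace (B * (eps / (B + 1)) * (B + 1)) with (B * eps) by (field; lra). nra.
Qed.

Lemma fin_common_delta n (P : Fin.t n -> R -> Prop) :
  (forall k dl dl', 0 < dl' <= dl -> P k dl -> P k dl') ->
  (forall k, exists dl, 0 < dl /\ P k dl) -> exists dl, 0 < dl /\ forall k, P k dl.
Proof.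
  induction n as [|n IH]; intros Hmono Hk.
  - exists 1; split; [lra|]. intros k. exact (Fin.case0 (fun k => P k 1) k).
  - destruct (IH (fun k => P (Fin.FS k))) as [d1 [Hd1 H1]]; [intros; eapply Hmono; eauto|intros; apply Hk|].
    destruct (Hk Fin.F1) as [d0 [Hd0 H0]].
    assert (Hmin : 0 < Rmin d0 d1) by (apply Rmin_pos; assumption).
    exists (Rmin d0 d1); split; [exact Hmin|].
    intros k. apply (Fin.caseS' k (fun k => P k (Rmin d0 d1))).
    + eapply Hmono; [split; [exact Hmin|apply Rmin_l]|exact H0].
    + intros k'. eapply Hmono; [split; [exact Hmin|apply Rmin_r]|exact (H1 k')].
Qed.

Definition solution {n : nat} (F : R -> vec n -> vec n) (x : R -> vec n) (t : R) : Prop :=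
  forall s, 0 <= s <= t -> forall k, deriv_within 0 t (fun u => x u k) s (F s (x s) k).

Lemma solution_restrict {n} (F : R -> vec n -> vec n) x t s :
  solution F x t -> 0 <= s <= t -> solution F x s.
Proof.
  intros Hx Hs u Hu k. apply (deriv_within_restrict 0 t); try lra. apply Hx; lra.
Qed.

Lemma solution_cont {n} (F : R -> vec n -> vec n) x t tau r :
  solution F x t -> 0 <= tau <= t -> 0 < r -> exists dl, 0 < dl /\
    forall j s, 0 <= s <= t -> Rabs (s - tau) < dl -> Rabs (x s j - x tau j) < r.
Proof.
  intros Hx Htau Hr.
  apply (fin_common_delta n (fun j dl => forall s, 0 <= s <= t -> Rabs (s - tau) < dl ->
           Rabs (x s j - x tau j) < r)).
  - intros j dl dl' Hdl Hj s Hs Hsdl. apply Hj; [exact Hs|lra].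
  - intros j. destruct (deriv_within_cont _ _ _ _ _ (Hx tau Htau j) r Hr) as [dl [Hdl Hj]].
    exists dl. split; [exact Hdl|]. intros s Hs Hsdl. exact (Hj s Hsdl Hs).
Qed.

Lemma contraction_step_exists d1 r L :
  0 < d1 -> 0 < r -> 0 <= L -> exists dl, 0 < dl /\ dl < d1 /\ dl < r /\ L * dl <= / 2.
Proof.
  intros Hd1 Hr HL. set (m := Rmin (Rmin d1 r) (/ (L + 1))).
  assert (Hm : 0 < m) by (repeat apply Rmin_pos; try assumption; apply Rinv_0_lt_compat; lra).
  assert (Hm_d1 : m <= d1) by (eapply Rle_trans; apply Rmin_l).
  assert (Hm_r : m <= r) by (eapply Rle_trans; [apply Rmin_l|apply Rmin_r]).
  assert (HLm : L * m <= 1).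
  { apply (Rle_trans _ ((L + 1) * / (L + 1))); [|right; field; lra].
    apply Rmult_le_compat; try lra; apply Rmin_r. }
  exists (m / 2). repeat split; lra.
Qed.

Section Uniqueness.
Variables (n : nat) (F : R -> vec n -> vec n) (t : R) (x y : R -> vec n).
Hypotheses (F_lip : loc_lipschitz F) (x_sol : solution F x t) (y_sol : solution F y t).

(* On [tau, tau + dl] with L dl <= 1/2, the mean value inequality halves any
   uniform bound on |x - y|, starting from the bound 2 r of the Lipschitz ball. *)
Lemma solution_local_unique tau :
  0 <= tau < t -> (forall k, x tau k = y tau k) ->
  exists dl, 0 < dl /\ forall s, tau < s <= tau + dl -> s <= t -> forall k, x s k = y s k.
Proof.
  intros Htau Heq.
  destruct (F_lip tau (x tau)) as [r [L [Hr [HL Hlip]]]].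
  destruct (solution_cont F x t tau r x_sol ltac:(lra) Hr) as [dx [Hdx Hxball]].
  destruct (solution_cont F y t tau r y_sol ltac:(lra) Hr) as [dy [Hdy Hyball]].
  destruct (contraction_step_exists (Rmin dx dy) r L) as [dl [Hdl [Hdl_d [Hdl_r HLdl]]]];
    [apply Rmin_pos; assumption|assumption|assumption|].
  assert (Hin : forall s, tau <= s <= tau + dl -> s <= t -> forall j,
             Rabs (x s j - x tau j) < r /\ Rabs (y s j - x tau j) < r).
  { intros s Hs Hst j.
    assert (Hsd : Rabs (s - tau) < Rmin dx dy) by (rewrite Rabs_right; lra).
    split; [apply Hxball|rewrite (Heq j); apply Hyball]; try lra.
    - exact (Rlt_le_trans _ _ _ Hsd (Rmin_l _ _)).
    - exact (Rlt_le_trans _ _ _ Hsd (Rmin_r _ _)). }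
  assert (Hhalve : forall m s, tau <= s <= tau + dl -> s <= t -> forall j,
             Rabs (x s j - y s j) <= 2 * r * (/ 2) ^ m).
  { induction m as [|m IH]; intros s Hs Hst j.
    - destruct (Hin s Hs Hst j) as [Hxs Hys].
      pose proof (Rdist_tri (x s j) (y s j) (x tau j)). unfold Rdist in *.
      rewrite Rabs_minus_sym in Hys. simpl. lra.
    - set (B := 2 * r * (/ 2) ^ m).
      assert (HB : 0 <= B) by (unfold B; apply Rmult_le_pos; [lra|apply pow_le; lra]).
      assert (Hmvi := deriv_within_bound tau s (fun u => x u j - y u j)
                 (fun u => F u (x u) j - F u (y u) j) (L * B)).
      cbv beta in Hmvi. rewrite Heq, Rminus_diag, Rminus_0_r in Hmvi.
      eapply Rle_trans; [apply Hmvi|].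
      + lra.
      + intros u Hu. apply deriv_within_sub;
          (apply (deriv_within_restrict 0 t); [apply x_sol || apply y_sol; lra|lra|lra]).
      + intros u Hu. apply Hlip; [rewrite Rabs_right; lra| | |].
        * intros j'. apply (Hin u ltac:(lra) ltac:(lra) j').
        * intros j'. apply (Hin u ltac:(lra) ltac:(lra) j').
        * intros j'. apply IH; lra.
      + replace (2 * r * (/ 2) ^ S m) with (/ 2 * B) by (unfold B; simpl; ring).
        apply (Rle_trans _ (L * dl * B)); [|apply Rmult_le_compat_r; assumption].
        replace (L * dl * B) with (L * B * dl) by ring.
        apply Rmult_le_compat_l; [apply Rmult_le_pos|]; lra. }
  exists dl. split; [exact Hdl|]. intros s Hs Hst k.
  apply Rminus_diag_uniq, (geometric_bound_eq0 _ (2 * r)).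
  intros m. apply Hhalve; lra.
Qed.

Lemma solution_unique : x 0 = y 0 -> forall s, 0 <= s <= t -> x s = y s.
Proof.
  intros H0 s Hs. assert (Ht : 0 <= t) by lra.
  apply functional_extensionality. revert s Hs.
  apply (real_induction 0 t (fun s => forall k, x s k = y s k)); [lra|rewrite H0; reflexivity| |].
  - intros tau Htau Hbelow k.
    apply Rminus_diag_uniq, Rabs_le_0_eq0, Rle_plus_epsilon. intros eps Heps.
    destruct (deriv_within_cont _ _ _ _ _ (x_sol tau ltac:(lra) k) (eps / 2)) as [da [Hda Ha]]; [lra|].
    destruct (deriv_within_cont _ _ _ _ _ (y_sol tau ltac:(lra) k) (eps / 2)) as [db [Hdb Hb]]; [lra|].
    destruct (left_approx 0 tau (Rmin da db) (proj1 Htau)) as [u [Hu Hutau]]; [apply Rmin_pos; assumption|].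
    specialize (Ha u (Rlt_le_trans _ _ _ Hutau (Rmin_l _ _)) ltac:(lra)).
    specialize (Hb u (Rlt_le_trans _ _ _ Hutau (Rmin_r _ _)) ltac:(lra)).
    rewrite (Hbelow u Hu k) in Ha.
    pose proof (Rdist_tri (x tau k) (y tau k) (y u k)). unfold Rdist in *.
    rewrite Rabs_minus_sym in Ha. lra.
  - intros tau Htau Hupto.
    destruct (solution_local_unique tau Htau (Hupto tau ltac:(lra))) as [dl [Hdl Hloc]].
    exists dl. split; [exact Hdl|]. intros s Hs Hst. apply Hloc; lra.
Qed.

End Uniqueness.

Lemma sig_ext {A : Type} {P : A -> Prop} (a b : {x | P x}) :
  proj1_sig a = proj1_sig b -> a = b.
Proof. destruct a, b; simpl; intros ->; f_equal; apply proof_irrelevance. Qed.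

Section Runs.
Context {Sigma O : Type}.
Variable T : TSys Sigma O.

Lemma valid_from_app s l1 l2 :
  valid_from T s (l1 ++ l2) <-> valid_from T s l1 /\ valid_from T (last_st T s l1) l2.
Proof.
  revert s; induction l1 as [|[a s'] l1 IH]; intros s; simpl; [tauto|].
  rewrite IH. tauto.
Qed.

Lemma last_st_app s l1 l2 : last_st T s (l1 ++ l2) = last_st T (last_st T s l1) l2.
Proof. revert s; induction l1 as [|[a s'] l1 IH]; intros s; simpl; auto. Qed.

Lemma last_st_rcons s l a s' : last_st T s (l ++ (a, s') :: nil) = s'.
Proof. rewrite last_st_app. reflexivity. Qed.

End Runs.

Section RunTree.
Context {Sigma O : Type}.
Variable T : TSys Sigma O.

Lemma V_run_length (r0 : tS (V T)) l :
  valid_from (V T) r0 l ->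
  length (proj1_sig (last_st (V T) r0 l)) = (length (proj1_sig r0) + length l)%nat.
Proof.
  revert r0; induction l as [|[a r] l IH]; intros r0 Hv; simpl in *; [lia|].
  destruct Hv as [[s' Hs'] Hv]. rewrite IH by exact Hv. rewrite Hs', length_app. simpl. lia.
Qed.

Lemma V_run_unique (r0 : tS (V T)) l1 l2 :
  valid_from (V T) r0 l1 -> valid_from (V T) r0 l2 ->
  last_st (V T) r0 l1 = last_st (V T) r0 l2 -> l1 = l2.
Proof.
  revert l2; induction l1 as [|[a1 r1] l1 IH] using rev_ind;
    intros l2 H1 H2 Heq; destruct l2 as [|[a2 r2] l2 _] using rev_ind; auto;
    try (apply (f_equal (fun r => length (proj1_sig r))) in Heq;
         rewrite !V_run_length, ?length_app in Heq by assumption; simpl in Heq; lia).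
  rewrite !last_st_rcons in Heq. subst r2.
  apply valid_from_app in H1 as [H1 [[s1 Hs1] _]].
  apply valid_from_app in H2 as [H2 [[s2 Hs2] _]].
  rewrite Hs1 in Hs2. apply app_inj_tail in Hs2 as [Hlast Hstep]. injection Hstep as -> ->.
  rewrite (IH l2 H1 H2 (sig_ext _ _ Hlast)). reflexivity.
Qed.

Lemma V_run_exists (r : tS (V T)) :
  exists l, valid_from (V T) (ti (V T)) l /\ last_st (V T) (ti (V T)) l = r.
Proof.
  destruct r as [l p]. revert p.
  induction l as [|[a s] l IH] using rev_ind; intros p.
  - exists nil. split; [exact I|]. apply sig_ext. reflexivity.
  - destruct (proj1 (valid_from_app T _ _ _) p) as [p' _].
    destruct (IH p') as [L [HL Hlast]].
    exists (L ++ (a, exist _ (l ++ (a, s) :: nil) p) :: nil). split.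
    + apply valid_from_app. rewrite Hlast. split; [exact HL|]. split; [|exact I].
      exists s. reflexivity.
    + apply last_st_rcons.
Qed.

Lemma V_is_tree : is_tree (V T).
Proof.
  intros r. destruct (V_run_exists r) as [l [Hv Hlast]].
  exists l. split; [split; assumption|].
  intros l' [Hv' Hlast']. apply (V_run_unique (ti (V T))); congruence.
Qed.

End RunTree.

(** * The free hybrid system of a transition system *)

Lemma cont2_const n (c : vec n) : cont2 (fun _ _ => c).
Proof.
  intros t0 x0 eps Heps. exists 1. split; [lra|]. intros t x _ _ k.
  rewrite Rminus_diag, Rabs_R0. exact Heps.
Qed.

Lemma loc_lipschitz_const n (c : vec n) : loc_lipschitz (fun _ _ => c).
Proof.
  intros t0 x0. exists 1, 0. split; [lra|split; [lra|]].
  intros t x y _ _ _ delta _ k. rewrite Rminus_diag, Rabs_R0. lra.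
Qed.

Definition unit_rate : R -> vec 1 -> vec 1 := fun _ _ _ => 1.

Lemma solution_unit_rate t : solution unit_rate (fun s _ => s) t.
Proof.
  intros s Hs k eps Heps. exists 1. split; [lra|]. intros h Hh _ _.
  unfold unit_rate. replace ((s + h - s) / h - 1) with 0 by (field; exact Hh).
  rewrite Rabs_R0. exact Heps.
Qed.

Lemma solution_unit_rate_value x t :
  0 <= t -> x 0 = (fun _ => 0) -> solution unit_rate x t -> x t Fin.F1 = t.
Proof.
  intros Ht H0 Hx.
  rewrite (solution_unique 1 unit_rate t x (fun s _ => s)
             (loc_lipschitz_const 1 (fun _ => 1)) Hx (solution_unit_rate t) H0 t); [reflexivity|lra].
Qed.

Section FreeHybridSystem.
Context {Sigma O : Type}.
Variable T : TSys Sigma O.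

Definition ts_edge (e : tS T * Sigma * tS T) : Prop :=
  exists t, tD T (fst (fst e)) (snd (fst e), t) (snd e).

(* Resets live on edges only and trajectories are only required to exist, so a
   realization is determined by the data that morphisms of hybrid systems
   preserve; this is what makes transposes unique. *)
Record realization (n : nat) : Type := {
  rF : tS T -> R -> vec n -> vec n;
  rR : {e | ts_edge e} -> vec n -> vec n;
  rv : tS T -> vec n;
  rF_cont : forall m, cont2 (rF m);
  rF_lip : forall m, loc_lipschitz (rF m);
  rv_trans : forall m a t m', tD T m (a, t) m' ->
    exists x, x 0 = rv m /\ solution (rF m) x (proj1_sig t) /\
      forall he, rR (exist _ (m, a, m') he) (x (proj1_sig t)) = rv m'
}.
Arguments rF {n}. Arguments rR {n}. Arguments rv {n}.
Arguments rF_cont {n}. Arguments rF_lip {n}. Arguments rv_trans {n}.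

Definition subsystem : Type := {n : nat & realization n}.

Definition sub_state : Type := forall i : subsystem, vec (projT1 i).

Definition canonical_state (m : tS T) : sub_state := fun i => rv (projT2 i) m.

Definition flows_to (m : tS T) (s : R) (sg : sub_state) : Prop :=
  forall i, exists x, x 0 = rv (projT2 i) m /\ solution (rF (projT2 i) m) x s /\ x s = sg i.

Definition free_guard (e : {e | ts_edge e}) (sg : sub_state) : Prop :=
  let '(m, a, m') := proj1_sig e in
  exists t, tD T m (a, t) m' /\ flows_to m (proj1_sig t) sg /\
    forall i, rR (projT2 i) e (sg i) = rv (projT2 i) m'.

Definition free_inv (m : tS T) (sg : sub_state) : Prop :=
  exists a t m', tD T m (a, t) m' /\ exists s, 0 <= s <= proj1_sig t /\ flows_to m s sg.

Definition free_hs : HSys Sigma O := {|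
  hM := tS T;
  hI := subsystem;
  hn := fun i => projT1 i;
  hE := ts_edge;
  hG := free_guard;
  hR := fun e i => rR (projT2 i) e;
  hF := fun m i => rF (projT2 i) m;
  hF_cont := fun m i => rF_cont (projT2 i) m;
  hF_lip := fun m i => rF_lip (projT2 i) m;
  hInv := free_inv;
  hm0 := ti T;
  hs0 := canonical_state (ti T);
  ho := fun m _ => tw T m
|}.

Lemma reach_free_hs c : reach free_hs c -> snd c = canonical_state (fst c).
Proof.
  induction 1 as [|c a t c' _ _ [_ [he [x [_ [_ [_ [Hg Hreset]]]]]]]]; [reflexivity|].
  rewrite Hreset. apply functional_extensionality_dep. intros i.
  destruct Hg as [tt [_ [Hflow Hg]]]. exact (Hg i).
Qed.

Definition clock : realization 1.
Proof.
  refine {| rF := fun _ => unit_rate; rR := fun _ _ _ => 0; rv := fun _ _ => 0;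
            rF_cont := fun _ => cont2_const 1 (fun _ => 1);
            rF_lip := fun _ => loc_lipschitz_const 1 (fun _ => 1) |}.
  intros m a t m' _. exists (fun s _ => s).
  split; [reflexivity|split; [apply solution_unit_rate|reflexivity]].
Defined.

(* The clock subsystem measures the duration of a step of free_hs. *)
Lemma free_hs_step c a t c' :
  reach free_hs c -> hstep free_hs c a t c' ->
  exists tt : nnR, proj1_sig tt = t /\ tD T (fst c) (a, tt) (fst c').
Proof.
  intros Hreach [Ht [he [x [Hx0 [Hxd [_ [Hg _]]]]]]].
  destruct Hg as [tt [Htr [Hflow _]]]. exists tt. split; [|exact Htr].
  set (i := existT realization 1%nat clock : subsystem).
  destruct (Hflow i) as [y [Hy0 [Hy Hyt]]].
  rewrite <- (solution_unit_rate_value y (proj1_sig tt) (proj2_sig tt) Hy0 Hy), Hyt.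
  apply solution_unit_rate_value; [exact Ht| |exact (Hxd i)].
  rewrite Hx0, (reach_free_hs c Hreach). reflexivity.
Qed.

Lemma free_hs_step_of_trans m a (tt : nnR) m' :
  tD T m (a, tt) m' -> hstep free_hs (m, canonical_state m) a (proj1_sig tt) (m', canonical_state m').
Proof.
  intros Htr.
  set (x := fun i : subsystem =>
         proj1_sig (constructive_indefinite_description _ (rv_trans (projT2 i) m a tt m' Htr))).
  assert (Hx : forall i, x i 0 = rv (projT2 i) m /\ solution (rF (projT2 i) m) (x i) (proj1_sig tt) /\
            forall he, rR (projT2 i) (exist _ (m, a, m') he) (x i (proj1_sig tt)) = rv (projT2 i) m').
  { intros i. unfold x. destruct constructive_indefinite_description as [y Hy]. exact Hy. }
  assert (Hflow : forall s, 0 <= s <= proj1_sig tt -> flows_to m s (fun i => x i s)).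
  { intros s Hs i. exists (x i). split; [apply Hx|split; [|reflexivity]].
    apply (solution_restrict _ _ (proj1_sig tt)); [apply Hx|exact Hs]. }
  split; [exact (proj2_sig tt)|].
  exists (ex_intro _ tt Htr), x.
  split; [intros i; apply Hx|split; [intros i; apply Hx|split; [|split]]].
  - intros s Hs. exists a, tt, m'. split; [exact Htr|]. exists s. split; [exact Hs|exact (Hflow s Hs)].
  - exists tt. split; [exact Htr|]. split; [apply Hflow; split; [exact (proj2_sig tt)|lra]|].
    intros i. apply Hx.
  - apply functional_extensionality_dep. intros i. symmetry. apply Hx.
Qed.

End FreeHybridSystem.

Arguments ts_edge {Sigma O T}.
Arguments realization {Sigma O}.
Arguments rF {Sigma O T n}. Arguments rR {Sigma O T n}. Arguments rv {Sigma O T n}.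
Arguments subsystem {Sigma O}. Arguments canonical_state {Sigma O T}.
Arguments flows_to {Sigma O T}. Arguments free_hs {Sigma O}.

Section HybridRuns.
Context {Sigma O : Type} (d : O -> O -> R).

Lemma kmap_init (S1 S2 : HSys Sigma O) (h : HSmor d S1 S2) : kmap h (ti (K S1)) = ti (K S2).
Proof. unfold kmap; simpl. rewrite (f_init _ _ _ _ _ h), (f_s0 _ _ _ _ _ h). reflexivity. Qed.

Lemma last_st_hmap (S1 S2 : HSys Sigma O) (h : HSmor d S1 S2) l c :
  last_st (K S2) (kmap h c) (hmap h l) = kmap h (last_st (K S1) c l).
Proof. revert c; induction l as [|[lab c1] l IH]; intros c; simpl; auto. Qed.

Lemma reach_last_st (S : HSys Sigma O) l c :
  reach S c -> valid_from (K S) c l -> reach S (last_st (K S) c l).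
Proof.
  revert c; induction l as [|[[a tt] c1] l IH]; intros c Hr Hv; simpl in *; [exact Hr|].
  destruct Hv as [Hstep Hv]. apply IH; [eapply reachS; eassumption|exact Hv].
Qed.

End HybridRuns.

Section Unit.
Context {Sigma O : Type} (d : O -> O -> R) (d_refl : forall x, d x x = 0).
Variable T : TSys Sigma O.

Definition lift_run (l : list (Lab Sigma * tS T)) : list (Lab Sigma * config (free_hs T)) :=
  map (fun p => (fst p, (snd p, canonical_state (snd p)))) l.

Definition unlift_run (l : list (Lab Sigma * config (free_hs T))) : list (Lab Sigma * tS T) :=
  map (fun p => (fst p, fst (snd p))) l.

Lemma lift_run_valid m l :
  valid_from T m l -> valid_from (K (free_hs T)) (m, canonical_state m) (lift_run l).
Proof.
  revert m; induction l as [|[[a tt] m1] l IH]; intros m Hv; simpl in *; [exact I|].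
  destruct Hv as [Htr Hv]. split; [apply free_hs_step_of_trans, Htr|apply IH, Hv].
Qed.

Lemma last_st_lift_run m l :
  last_st (K (free_hs T)) (m, canonical_state m) (lift_run l)
  = (last_st T m l, canonical_state (last_st T m l)).
Proof. revert m; induction l as [|[lab m1] l IH]; intros m; simpl; auto. Qed.

Lemma free_run_lift l c :
  reach (free_hs T) c -> valid_from (K (free_hs T)) c l ->
  l = lift_run (unlift_run l) /\ valid_from T (fst c) (unlift_run l) /\
  last_st T (fst c) (unlift_run l) = fst (last_st (K (free_hs T)) c l).
Proof.
  revert c; induction l as [|[[a tt] c1] l IH]; intros c Hr Hv; simpl in *; [auto|].
  destruct Hv as [Hstep Hv].
  assert (Hr1 : reach (free_hs T) c1) by (eapply reachS; eassumption).
  destruct (IH c1 Hr1 Hv) as [Hl [Hvl Hlast]].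
  destruct (free_hs_step T c a _ c1 Hr Hstep) as [tt' [Htt Htr]].
  replace tt' with tt in Htr by (apply sig_ext; symmetry; exact Htt).
  split; [|split; [split; assumption|exact Hlast]].
  pose proof (reach_free_hs T c1 Hr1) as Hc1. destruct c1 as [m1 s1]. simpl in Hc1.
  rewrite <- Hl, Hc1. reflexivity.
Qed.

Definition eta_inv_fun (r : tS (H (free_hs T))) : tS T :=
  fst (last_st (K (free_hs T)) (ti (K (free_hs T))) (proj1_sig r)).

Definition eta_inv : TSmor d (H (free_hs T)) T.
Proof.
  refine {| tf := eta_inv_fun; tf_init := eq_refl |}.
  - intros r [a tt] r' [c' Hr']. unfold eta_inv_fun. rewrite Hr', last_st_rcons.
    pose proof (proj2_sig r') as Hv. cbv beta in Hv. rewrite Hr' in Hv.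
    apply valid_from_app in Hv as [Hv [Hstep _]].
    destruct (free_hs_step T _ a _ c' (reach_last_st _ _ _ (reach0 _ _ _) Hv) Hstep)
      as [tt' [Htt Htr]].
    replace tt' with tt in Htr by (apply sig_ext; symmetry; exact Htt). exact Htr.
  - exists 0. split; [lra|]. intros r. simpl. rewrite d_refl. lra.
Defined.

Variable hT : is_tree T.

Definition tree_run (m : tS T) : list (Lab Sigma * tS T) :=
  proj1_sig (constructive_indefinite_description _ (hT m)).

Lemma tree_run_spec m : valid_from T (ti T) (tree_run m) /\ last_st T (ti T) (tree_run m) = m.
Proof.
  unfold tree_run. destruct (constructive_indefinite_description _ (hT m)) as [l Hl].
  exact (proj1 Hl).
Qed.

Lemma tree_run_unique m l : valid_from T (ti T) l -> last_st T (ti T) l = m -> l = tree_run m.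
Proof.
  intros Hv Hlast. unfold tree_run.
  destruct (constructive_indefinite_description _ (hT m)) as [l' [Hl' Hu]]; simpl.
  symmetry. apply Hu. split; assumption.
Qed.

Definition eta_fun (m : tS T) : tS (H (free_hs T)) :=
  exist _ (lift_run (tree_run m)) (lift_run_valid (ti T) _ (proj1 (tree_run_spec m))).

Lemma last_st_eta_fun m :
  last_st (K (free_hs T)) (ti (K (free_hs T))) (proj1_sig (eta_fun m)) = (m, canonical_state m).
Proof.
  pose proof (last_st_lift_run (ti T) (tree_run m)) as Hlast.
  rewrite (proj2 (tree_run_spec m)) in Hlast. exact Hlast.
Qed.

Lemma eta_fun_zero_bounded m : d (tw T m) (tw (H (free_hs T)) (eta_fun m)) <= 0.
Proof.
  change (tw (H (free_hs T)) (eta_fun m))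
    with (tw (K (free_hs T)) (last_st (K (free_hs T)) (ti (K (free_hs T))) (proj1_sig (eta_fun m)))).
  rewrite last_st_eta_fun. simpl. rewrite d_refl. lra.
Qed.

Definition eta : TSmor d T (H (free_hs T)).
Proof.
  refine {| tf := eta_fun |}.
  - apply sig_ext. simpl. rewrite <- (tree_run_unique (ti T) nil); reflexivity.
  - intros m lab m' Htr. exists (m', canonical_state m'). simpl.
    rewrite <- (tree_run_unique m' (tree_run m ++ (lab, m') :: nil)).
    + unfold lift_run. rewrite map_app. reflexivity.
    + apply valid_from_app. rewrite (proj2 (tree_run_spec m)).
      split; [apply tree_run_spec|split; [exact Htr|exact I]].
    + apply last_st_rcons.
  - exists 0. split; [lra|]. exact eta_fun_zero_bounded.
Defined.

Lemma eta_inv_eta m : tf eta_inv (tf eta m) = m.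
Proof. simpl. unfold eta_inv_fun. rewrite last_st_eta_fun. reflexivity. Qed.

Lemma eta_eta_inv r : proj1_sig (tf eta (tf eta_inv r)) = proj1_sig r.
Proof.
  destruct (free_run_lift (proj1_sig r) _ (reach0 _ _ _) (proj2_sig r)) as [Hl [Hv Hlast]].
  transitivity (lift_run (unlift_run (proj1_sig r))); [|symmetry; exact Hl].
  simpl. f_equal. symmetry. exact (tree_run_unique _ _ Hv Hlast).
Qed.

End Unit.

(** * Transposes and the counit *)

Section Transpose.
Context {Sigma O : Type} (d : O -> O -> R).
Variables (T : TSys Sigma O) (S : HSys Sigma O) (g : TSmor d T (H S)).

Definition last_config (m : tS T) : config S :=
  last_st (K S) (ti (K S)) (proj1_sig (tf g m)).

Lemma hstep_last_config m a (tt : nnR) m' :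
  tD T m (a, tt) m' -> hstep S (last_config m) a (proj1_sig tt) (last_config m').
Proof.
  intros Htr. destruct (tf_tr _ _ _ _ _ g m (a, tt) m' Htr) as [c' Hc'].
  pose proof (proj2_sig (tf g m')) as Hv. cbv beta in Hv. rewrite Hc' in Hv.
  apply valid_from_app in Hv as [_ [Hstep _]].
  unfold last_config at 2. rewrite Hc', last_st_rcons. exact Hstep.
Qed.

Lemma tf_run l :
  valid_from T (ti T) l ->
  proj1_sig (tf g (last_st T (ti T) l)) = map (fun p => (fst p, last_config (snd p))) l.
Proof.
  induction l as [|[lab m'] l IH] using rev_ind; intros Hv.
  - simpl. rewrite (tf_init _ _ _ _ _ g). reflexivity.
  - apply valid_from_app in Hv as [Hv [Htr _]].
    destruct (tf_tr _ _ _ _ _ g _ lab m' Htr) as [c' Hc'].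
    rewrite last_st_rcons, map_app, <- (IH Hv), Hc'. cbn [map fst snd].
    unfold last_config. rewrite Hc', last_st_rcons. reflexivity.
Qed.

Definition transpose_mode (m : tS T) : hM S := fst (last_config m).

Lemma transpose_edge e :
  ts_edge e -> hE S (transpose_mode (fst (fst e)), snd (fst e), transpose_mode (snd e)).
Proof.
  destruct e as [[m a] m']. intros [tt Htr].
  destruct (hstep_last_config _ _ _ _ Htr) as [_ [he _]]. exact he.
Qed.

Definition transpose_realization (i' : hI S) : realization T (hn S i').
Proof.
  refine {| rF := fun m => hF S (transpose_mode m) i';
            rR := fun e => hR S (exist _ _ (transpose_edge _ (proj2_sig e))) i';
            rv := fun m => snd (last_config m) i';
            rF_cont := fun m => hF_cont _ _ S _ i';
            rF_lip := fun m => hF_lip _ _ S _ i' |}.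
  intros m a tt m' Htr.
  destruct (hstep_last_config _ _ _ _ Htr) as [_ [he [x [Hx0 [Hx [_ [_ Hreset]]]]]]].
  exists (x i'). split; [apply Hx0|split; [exact (Hx i')|]].
  intros he'. rewrite Hreset. cbv beta. f_equal. apply sig_ext. reflexivity.
Defined.

Definition transpose_index (i' : hI S) : subsystem T :=
  existT _ (hn S i') (transpose_realization i').

Lemma transport_flows_to m s t sg (x : forall i', R -> vec (hn S i')) :
  flows_to m s sg -> 0 <= s <= t ->
  (forall i', x i' 0 = snd (last_config m) i') ->
  (forall i', solution (hF S (transpose_mode m) i') (x i') t) ->
  transport (free_hs T) S transpose_index (fun _ => eq_refl) sg = fun i' => x i' s.
Proof.
  intros Hflow Hs Hx0 Hx. apply functional_extensionality_dep. intros i'.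
  destruct (Hflow (transpose_index i')) as [y [Hy0 [Hy Hys]]].
  unfold transport, cast. simpl in *. rewrite <- Hys.
  apply (solution_unique _ _ s _ _ (hF_lip _ _ S _ i') Hy); [|rewrite Hy0, Hx0; reflexivity|lra].
  exact (solution_restrict _ _ _ _ (Hx i') Hs).
Qed.

Definition transpose : HSmor d (free_hs T) S.
Proof.
  refine (@Build_HSmor Sigma O d (free_hs T) S transpose_mode transpose_index _
            (fun m a m' he => transpose_edge (m, a, m') he) (fun i' => eq_refl) _ _ _ _ _ _).
  - change (fst (last_config (ti T)) = hm0 S).
    unfold last_config. rewrite (tf_init _ _ _ _ _ g). reflexivity.
  - reflexivity.
  - reflexivity.
  - apply functional_extensionality_dep. intros i'.
    change (snd (last_config (ti T)) i' = hs0 S i').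
    unfold last_config. rewrite (tf_init _ _ _ _ _ g). reflexivity.
  - intros m sg [a [tt [m' [Htr [s [Hs Hflow]]]]]].
    destruct (hstep_last_config _ _ _ _ Htr) as [_ [he [x [Hx0 [Hx [Hinv _]]]]]].
    rewrite (transport_flows_to m s (proj1_sig tt) sg x Hflow Hs Hx0 Hx). exact (Hinv s Hs).
  - intros m a m' he sg [tt [Htr [Hflow _]]].
    destruct (hstep_last_config _ _ _ _ Htr) as [_ [he' [x [Hx0 [Hx [_ [Hguard _]]]]]]].
    rewrite (transport_flows_to m (proj1_sig tt) (proj1_sig tt) sg x Hflow
               (conj (proj2_sig tt) (Rle_refl _)) Hx0 Hx).
    replace (transpose_edge (m, a, m') he) with he' by apply proof_irrelevance.
    exact Hguard.
  - destruct (tf_bounded _ _ _ _ _ g) as [eps [Heps Hbound]]. exists eps. split; [exact Heps|].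
    intros m sg Hreach. apply reach_free_hs in Hreach. simpl in Hreach. subst sg.
    exact (Hbound m).
Defined.

End Transpose.

Arguments last_config {Sigma O d T S}. Arguments transpose_mode {Sigma O d T S}.
Arguments transpose_index {Sigma O d T S}. Arguments transpose {Sigma O d T S}.

Lemma subsystem_eq {Sigma O : Type} (T : TSys Sigma O) n (r : realization T n)
  (i : subsystem T) (p : projT1 i = n) :
  (forall m t x, cast p (rF (projT2 i) m t x) = rF r m t (cast p x)) ->
  (forall e x, cast p (rR (projT2 i) e x) = rR r e (cast p x)) ->
  (forall m, cast p (rv (projT2 i) m) = rv r m) ->
  existT _ n r = i.
Proof.
  destruct i as [n' r']. simpl in p. destruct p. simpl. intros HF HR Hv. f_equal.
  destruct r as [F1 R1 v1 c1 l1 t1], r' as [F2 R2 v2 c2 l2 t2]. simpl in *.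
  assert (F1 = F2) by (do 3 (apply functional_extensionality; intro); symmetry; apply HF).
  assert (R1 = R2) by (do 2 (apply functional_extensionality; intro); symmetry; apply HR).
  assert (v1 = v2) by (apply functional_extensionality; intro; symmetry; apply Hv).
  subst. f_equal; apply proof_irrelevance.
Qed.

Section Adjunction.
Context {Sigma O : Type} (d : O -> O -> R) (d_refl : forall x, d x x = 0).
Variables (T : TSys Sigma O) (hT : is_tree T) (S : HSys Sigma O).

Lemma last_st_hmap_eta (h : HSmor d (free_hs T) S) m :
  last_st (K S) (ti (K S)) (hmap h (proj1_sig (tf (eta d d_refl T hT) m)))
  = kmap h (m, canonical_state m).
Proof.
  rewrite <- (kmap_init d _ _ h), last_st_hmap.
  exact (f_equal (kmap h) (last_st_eta_fun T hT m)).
Qed.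

Lemma transpose_factor (g : TSmor d T (H S)) m :
  hmap (transpose g) (proj1_sig (tf (eta d d_refl T hT) m)) = proj1_sig (tf g m).
Proof.
  destruct (tree_run_spec T hT m) as [Hv Hlast].
  rewrite <- Hlast at 2. rewrite (tf_run d T S g _ Hv).
  simpl. unfold hmap, lift_run. rewrite map_map. apply map_ext. intros [lab m']. simpl.
  f_equal. symmetry. apply surjective_pairing.
Qed.

Lemma transpose_unique (g : TSmor d T (H S)) (h : HSmor d (free_hs T) S) :
  (forall m, hmap h (proj1_sig (tf (eta d d_refl T hT) m)) = proj1_sig (tf g m)) ->
  hs_eq (transpose g) h.
Proof.
  intros Hh.
  assert (Hlast : forall m, kmap h (m, canonical_state m) = last_config g m).
  { intros m. rewrite <- last_st_hmap_eta, Hh. reflexivity. }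
  assert (HM : forall m, fM h m = transpose_mode g m) by (intros m; exact (f_equal fst (Hlast m))).
  split; [intros m; symmetry; apply HM|]. intros i'.
  apply (subsystem_eq T (hn S i') _ (fI h i') (f_dim h i')).
  - intros m t x. simpl. rewrite <- HM. exact (f_flow _ _ _ _ _ h m i' t x).
  - intros [[[m a] m'] he] x. simpl.
    etransitivity; [exact (f_reset _ _ _ _ _ h m a m' he i' x)|].
    f_equal. apply sig_ext. simpl. rewrite !HM. reflexivity.
  - intros m. exact (f_equal (fun c => snd c i') (Hlast m)).
Qed.

End Adjunction.

Lemma counit_zero_bounded {Sigma O : Type} (d : O -> O -> R) (d_refl : forall x, d x x = 0)
  (S : HSys Sigma O) (hT : is_tree (H S)) (e : HSmor d (free_hs (H S)) S) :
  (forall r, hmap e (proj1_sig (tf (eta d d_refl (H S) hT) r)) = proj1_sig r) ->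
  hs_zero_bounded e.
Proof.
  intros He r sg Hreach. apply reach_free_hs in Hreach. simpl in Hreach. subst sg.
  pose proof (last_st_hmap_eta d d_refl (H S) hT S e r) as Hlast. rewrite He in Hlast.
  change (d (tw (K S) (last_st (K S) (ti (K S)) (proj1_sig r)))
            (tw (K S) (kmap e (r, canonical_state r))) <= 0).
  rewrite Hlast, d_refl. lra.
Qed.

Theorem theorem4 (Sigma : Type) (O : Type) (d : O -> O -> R)
  (d_refl : forall x, d x x = 0)
  (d_sym : forall x y, d x y = d y x)
  (d_tri : forall x y z, d x z <= d x y + d y z) :
  (* H = V ∘ K lands in the full subcategory of synchronization trees *)
  (forall S : HSys Sigma O, is_tree (H S)) /\
  (* H has a left adjoint G, given by universal arrows eta_T : T -> H (G T) *)
  exists (Gobj : TSys Sigma O -> HSys Sigma O)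
         (eta : forall T : TSys Sigma O, is_tree T -> TSmor d T (H (Gobj T))),
    (* universal property *)
    (forall (T : TSys Sigma O) (hT : is_tree T) (S : HSys Sigma O) (g : TSmor d T (H S)),
        exists h : HSmor d (Gobj T) S,
          (forall x, hmap h (proj1_sig (tf (eta T hT) x)) = proj1_sig (tf g x)) /\
          (forall h' : HSmor d (Gobj T) S,
              (forall x, hmap h' (proj1_sig (tf (eta T hT) x)) = proj1_sig (tf g x)) ->
              hs_eq h h')) /\
    (* the unit is a natural isomorphism (coreflection) *)
    (forall (T : TSys Sigma O) (hT : is_tree T),
        exists k : TSmor d (H (Gobj T)) T,
          (forall x, tf k (tf (eta T hT) x) = x) /\
          (forall y, proj1_sig (tf (eta T hT) (tf k y)) = proj1_sig y)) /\
    (* the unit is 0-bounded *)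
    (forall (T : TSys Sigma O) (hT : is_tree T), ts_zero_bounded (eta T hT)) /\
    (* the counit eps_S : G (H S) -> S, i.e. the morphism with H eps_S ∘ eta_{H S} = id,
       is 0-bounded *)
    (forall (S : HSys Sigma O) (hT : is_tree (H S)) (e : HSmor d (Gobj (H S)) S),
        (forall x, hmap e (proj1_sig (tf (eta (H S) hT) x)) = proj1_sig x) ->
        hs_zero_bounded e).
Proof.
  split; [intros S; apply V_is_tree|].
  exists free_hs, (eta d d_refl).
  split; [|split; [|split]].
  - intros T hT S g. exists (transpose g).
    split; [apply transpose_factor|apply transpose_unique].
  - intros T hT. exists (eta_inv d d_refl T).
    split; [apply eta_inv_eta|apply eta_eta_inv].
  - intros T hT. exact (eta_fun_zero_bounded d d_refl T hT).
  - apply counit_zero_bounded.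
Qed.
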